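(* Let $\mathbf z(k)=\mathbf y-\mathbf u(k)$. For every $k\ge0$ and $\eta>0$, entrywise, $$\big(\mathbf I-2\eta(\tilde{\mathbf H}^+(k)+\mathbf H^-(k))\mathbf P\big)\mathbf z(k)\ \le\ \mathbf z(k+1)\ \le\ \big(\mathbf I-2\eta(\mathbf H^+(k)+\tilde{\mathbf H}^-(k))\mathbf P\big)\mathbf z(k).$$
   Context: Setup: distinct $\mathbf x_1,\dots,\mathbf x_n\in\mathbb S^{d-1}$, labels $\mathbf y\in\mathbb R^n$; network $\mathcal N(\mathbf x)=\frac1{\sqrt m}\sum_{r=1}^ma_r\mathrm{ReLU}(\mathbf w_r^\top\mathbf x+b_r)$ with fixed $a_r\in\{\pm1\}$; $\mathbf P$ symmetric positive definite; gradient descent with step $\eta$ on $\mathbf w_r,b_r$ for the loss $\frac12(\mathbf y-\mathbf u)^\top\mathbf P(\mathbf y-\mathbf u)$, using $\mathrm{ReLU}'(t)=\mathbb 1_{\{t\ge0\}}$; $\mathbf u(k)=(\mathcal N_k(\mathbf x_i))_i$ after $k$ steps. Write $\tilde{\mathbf x}_i=\frac1{\sqrt2}(\mathbf x_i,1)\in\mathbb R^{d+1}$, $\tilde{\mathbf w}_r(k)=(\mathbf w_r(k),b_r(k))\in\mathbb R^{d+1}$, $\mathcal A=\{r:a_r=1\}$, $\mathcal B=\{r:a_r=-1\}$. Define $H^\pm_{ij}(k)=\frac1m\tilde{\mathbf x}_i^\top\tilde{\mathbf x}_j\sum_{r\in\mathcal A\text{ (resp. }\mathcal B)}\mathbb 1_{\{\tilde{\mathbf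 w}_r(k)^\top\tilde{\mathbf x}_i\ge0,\ \tilde{\mathbf w}_r(k)^\top\tilde{\mathbf x}_j\ge0\}}$ ($+$ with $\mathcal A$, $-$ with $\mathcal B$), and $\tilde H^\pm_{ij}(k)=\frac1m\tilde{\mathbf x}_i^\top\tilde{\mathbf x}_j\sum_{r\in\mathcal A\text{ (resp. }\mathcal B)}\mathbb 1_{\{\tilde{\mathbf w}_r(k+1)^\top\tilde{\mathbf x}_i\ge0,\ \tilde{\mathbf w}_r(k)^\top\tilde{\mathbf x}_j\ge0\}}$. *)

From HB Require Import structures.
From mathcomp Require Import all_boot all_order all_algebra.
Set Implicit Arguments. Unset Strict Implicit. Unset Printing Implicit Defensive.
Import Order.TTheory GRing.Theory Num.Theory.
Local Open Scope ring_scope.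

Section TwoLayer.
Variables (R : rcfType) (n m d : nat).

Definition dotv (k : nat) (u v : 'rV[R]_k) : R := \sum_(l < k) u 0 l * v 0 l.

Definition relu (t : R) : R := if 0 <= t then t else 0.
Definition relu' (t : R) : R := if 0 <= t then 1 else 0.

Definition params := (('I_m -> 'rV[R]_d) * ('I_m -> R))%type.

Variables (a : 'I_m -> R) (x : 'I_n -> 'rV[R]_d) (y : 'cV[R]_n)
          (P : 'M[R]_n) (eta : R).

Definition net (th : params) (v : 'rV[R]_d) : R :=
  (Num.sqrt m%:R)^-1 * \sum_(r < m) a r * relu (dotv (th.1 r) v + th.2 r).

Definition outputs (th : params) : 'cV[R]_n := \col_(i < n) net th (x i).

(* dL/du_i for L = 1/2 (y-u)^T P (y-u) : the i-th entry of -(1/2)(P+P^T)(y-u) *)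
Definition dLdu (th : params) : 'cV[R]_n :=
  - ((2%:R)^-1 *: ((P + P^T) *m (y - outputs th))).

Definition grad_w (th : params) (r : 'I_m) : 'rV[R]_d :=
  \sum_(i < n) (dLdu th i 0 * ((Num.sqrt m%:R)^-1 * a r
                  * relu' (dotv (th.1 r) (x i) + th.2 r))) *: x i.
Definition grad_b (th : params) (r : 'I_m) : R :=
  \sum_(i < n) dLdu th i 0 * ((Num.sqrt m%:R)^-1 * a r
                  * relu' (dotv (th.1 r) (x i) + th.2 r)).

Definition gd_step (th : params) : params :=
  (fun r => th.1 r - eta *: grad_w th r, fun r => th.2 r - eta * grad_b th r).

Fixpoint gd (th0 : params) (k : nat) : params :=
  if k is k'.+1 then gd_step (gd th0 k') else th0.

Definition u_at (th0 : params) (k : nat) : 'cV[R]_n := outputs (gd th0 k).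
Definition z_at (th0 : params) (k : nat) : 'cV[R]_n := y - u_at th0 k.

Definition xt (i : 'I_n) : 'rV[R]_(d + 1) :=
  (Num.sqrt 2%:R)^-1 *: row_mx (x i) (const_mx 1).
Definition wt (th0 : params) (k : nat) (r : 'I_m) : 'rV[R]_(d + 1) :=
  row_mx ((gd th0 k).1 r) (const_mx ((gd th0 k).2 r)).

(* H^{+}(k) (s = 1, set A) and H^{-}(k) (s = -1, set B) *)
Definition Hmat (s : R) (th0 : params) (k : nat) : 'M[R]_n :=
  \matrix_(i < n, j < n)
    ((m%:R)^-1 * dotv (xt i) (xt j) *
     \sum_(r < m | a r == s)
        (if (0 <= dotv (wt th0 k r) (xt i)) && (0 <= dotv (wt th0 k r) (xt j))
         then 1 else 0)).

Definition Htmat (s : R) (th0 : params) (k : nat) : 'M[R]_n :=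
  \matrix_(i < n, j < n)
    ((m%:R)^-1 * dotv (xt i) (xt j) *
     \sum_(r < m | a r == s)
        (if (0 <= dotv (wt th0 k.+1 r) (xt i)) && (0 <= dotv (wt th0 k r) (xt j))
         then 1 else 0)).

End TwoLayer.

From HB Require Import structures.
From mathcomp Require Import all_boot all_order all_algebra.
From mathcomp Require Import ring lra.
Import Order.TTheory GRing.Theory Num.Theory.
Set Implicit Arguments. Unset Strict Implicit. Unset Printing Implicit Defensive.
Local Open Scope ring_scope.

(* Since P is symmetric, one gradient step moves the preactivation
   t_r(x_i) = w_r.x_i + b_r by
     eta a_r / sqrt m * sum_j (P z)_j 1{t_r(x_j) >= 0} (x_j.x_i + 1),
   while z_i decreases by 1 / sqrt m * sum_r a_r (relu t'_r - relu t_r).  Convexity of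
   relu bounds relu t' - relu t between relu' t (t' - t) and relu' t' (t' - t); after
   multiplication by a_r the two bounds swap for a_r = -1, which is why H~+ pairs with
   H- and H+ with H~-.  Summing over the neurons gives exactly the kernel products. *)

Section Dotv.
Variable R : rcfType.

Lemma dotvC k (u v : 'rV[R]_k) : dotv u v = dotv v u.
Proof. by apply: eq_bigr => l _; rewrite mulrC. Qed.

Lemma dotvDl k (u w v : 'rV[R]_k) : dotv (u + w) v = dotv u v + dotv w v.
Proof. by rewrite /dotv -big_split; apply: eq_bigr => l _; rewrite !mxE mulrDl. Qed.

Lemma dotvNl k (u v : 'rV[R]_k) : dotv (- u) v = - dotv u v.
Proof. by rewrite /dotv -sumrN; apply: eq_bigr => l _; rewrite !mxE mulNr. Qed.

Lemma dotvZl k s (u v : 'rV[R]_k) : dotv (s *: u) v = s * dotv u v.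
Proof. by rewrite /dotv mulr_sumr; apply: eq_bigr => l _; rewrite !mxE mulrA. Qed.

Lemma dotvZr k s (u v : 'rV[R]_k) : dotv u (s *: v) = s * dotv u v.
Proof. by rewrite dotvC dotvZl dotvC. Qed.

Lemma dotv_suml k p (F : 'I_p -> 'rV[R]_k) v :
  dotv (\sum_(j < p) F j) v = \sum_(j < p) dotv (F j) v.
Proof.
rewrite /dotv exchange_big /=; apply: eq_bigr => l _.
by rewrite summxE mulr_suml.
Qed.

Lemma dotv_row_const k (u v : 'rV[R]_k) (b c : R) :
  dotv (row_mx u (const_mx b : 'rV_1)) (row_mx v (const_mx c)) = dotv u v + b * c.
Proof.
rewrite /dotv big_split_ord /=; congr (_ + _).
  by apply: eq_bigr => l _; rewrite !row_mxEl.
by rewrite big_ord1 !row_mxEr !mxE.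
Qed.

End Dotv.

Lemma affine_update_entry (R : comNzRingType) n (M1 M2 P : 'M[R]_n) (s : R)
    (z : 'cV[R]_n) i :
  ((1%:M - s *: ((M1 + M2) *m P)) *m z) i 0 =
  z i 0 - (s * (M1 *m (P *m z)) i 0 + s * (M2 *m (P *m z)) i 0).
Proof. by rewrite mulmxBl mul1mx -scalemxAl !mulmxDl -!mulmxA !mxE mulrDr. Qed.

Section Relu.
Variable R : rcfType.

Lemma relu_increment (t t' : R) :
  relu' t * (t' - t) <= relu t' - relu t <= relu' t' * (t' - t).
Proof.
rewrite /relu /relu'.
by case: (lerP 0 t) => ?; case: (lerP 0 t') => ?; apply/andP; split; lra.
Qed.

Lemma relu'M_scale (e s t : R) : 0 < e ->
  (if (0 <= e * s) && (0 <= e * t) then 1 else 0) = relu' s * relu' t.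
Proof.
move=> e_gt0; rewrite !pmulr_rge0 // /relu'.
by case: (0 <= s); case: (0 <= t); rewrite ?mulr1 ?mulr0.
Qed.

End Relu.

Section GradientStep.
Variables (R : rcfType) (n m d : nat) (a : 'I_m -> R) (x : 'I_n -> 'rV[R]_d).
Variables (y : 'cV[R]_n) (P : 'M[R]_n) (eta : R).
Hypothesis P_sym : P^T = P.
Hypothesis a_sign : forall r, a r = 1 \/ a r = -1.

Local Notation c := (Num.sqrt (m%:R : R))^-1.
Local Notation step := (gd_step a x y P eta).
Local Notation residual th := (y - outputs a x th).

Definition preact (th : params R m d) r l := dotv (th.1 r) (x l) + th.2 r.

Definition gram (j l : 'I_n) := dotv (x j) (x l) + 1.

Definition preact_rate th r l :=
  \sum_(j < n) (P *m residual th) j 0 * relu' (preact th r j) * gram j l.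

Definition wlift (th : params R m d) r : 'rV[R]_(d + 1) :=
  row_mx (th.1 r) (const_mx (th.2 r)).

Lemma inv_sqrt_nat_sqr : c * c = m%:R^-1.
Proof. by rewrite -invfM -expr2 sqr_sqrtr // ler0n. Qed.

Lemma gramC j l : gram j l = gram l j.
Proof. by rewrite /gram dotvC. Qed.

Lemma net_sub th th' l : net a th' (x l) - net a th (x l) =
  \sum_(r < m) c * a r * (relu (preact th' r l) - relu (preact th r l)).
Proof.
rewrite /net -mulrBr -sumrB mulr_sumr.
by apply: eq_bigr => r _; rewrite /preact; ring.
Qed.

Lemma dLdu_sym th : dLdu a x y P th = - (P *m residual th).
Proof.
rewrite /dLdu P_sym mulmxDl -mulr2n -scaler_nat scalerA mulVf ?scale1r //.
by rewrite pnatr_eq0.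
Qed.

Lemma preact_step th r l :
  preact (step th) r l - preact th r l = eta * c * a r * preact_rate th r l.
Proof.
rewrite /preact /= dotvDl dotvNl dotvZl /grad_w /grad_b dotv_suml dLdu_sym.
under eq_bigr do rewrite dotvZl.
set s1 := \sum_(j < n) _ * dotv _ _; set s2 := \sum_(j < n) _.
suff -> : s2 = - (c * a r * preact_rate th r l) - s1 by ring.
apply/eqP; rewrite -subr_eq opprK -big_split /preact_rate mulr_sumr -sumrN /=.
by apply/eqP/eq_bigr => j _; rewrite mxE /gram /preact; ring.
Qed.

Local Notation rate th r l := (eta * m%:R^-1 * preact_rate th r l).

Section NeuronIncrement.
Variables (th : params R m d) (r : 'I_m) (l : 'I_n).

Local Notation t := (preact th r l).
Local Notation t' := (preact (step th) r l).
Local Notation g := (c * a r * (relu t' - relu t)).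

Lemma neuron_increment_pos :
  a r = 1 -> relu' t * rate th r l <= g <= relu' t' * rate th r l.
Proof.
move=> ar; have /andP[lo hi] := relu_increment t t'.
have c_ge0 : 0 <= c by rewrite invr_ge0 sqrtr_ge0.
rewrite preact_step ar -inv_sqrt_nat_sqr in lo hi *.
by apply/andP; split; nra.
Qed.

Lemma neuron_increment_neg :
  a r = -1 -> relu' t' * rate th r l <= g <= relu' t * rate th r l.
Proof.
move=> ar; have /andP[lo hi] := relu_increment t t'.
have c_ge0 : 0 <= c by rewrite invr_ge0 sqrtr_ge0.
rewrite preact_step ar -inv_sqrt_nat_sqr in lo hi *.
by apply/andP; split; nra.
Qed.

End NeuronIncrement.

Lemma residual_step th l :
  (residual (step th)) l 0 = (residual th) l 0 -
    (\sum_(r < m | a r == 1) c * a r * (relu (preact (step th) r l) - relu (preact th r l)) +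
     \sum_(r < m | a r == -1) c * a r * (relu (preact (step th) r l) - relu (preact th r l))).
Proof.
have one_neqN1 : (1 == -1 :> R) = false by apply/eqP => ?; lra.
have := net_sub th (step th) l; rewrite (bigID (fun r => a r == 1)) /=.
rewrite [X in _ = _ + X](eq_bigl (fun r => a r == -1)) => [E|r].
  by rewrite !mxE -E; ring.
by case: (a_sign r) => ->; rewrite ?eqxx ?one_neqN1 // eq_sym one_neqN1.
Qed.

Lemma residual_step_bounds th l :
  (residual th) l 0 - (\sum_(r < m | a r == 1) relu' (preact (step th) r l) * rate th r l +
                       \sum_(r < m | a r == -1) relu' (preact th r l) * rate th r l)
  <= (residual (step th)) l 0 <=
  (residual th) l 0 - (\sum_(r < m | a r == 1) relu' (preact th r l) * rate th r l +
                       \sum_(r < m | a r == -1) relu' (preact (step th) r l) * rate th r l).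
Proof.
rewrite residual_step !lerD2l !lerN2.
apply/andP; split; apply: lerD; apply: ler_sum => r /eqP ar.
- by have /andP[] := neuron_increment_pos th l ar.
- by have /andP[] := neuron_increment_neg th l ar.
- by have /andP[] := neuron_increment_pos th l ar.
- by have /andP[] := neuron_increment_neg th l ar.
Qed.

Lemma dotv_xt j l : dotv (xt x j) (xt x l) = 2%:R^-1 * gram j l.
Proof.
rewrite /xt dotvZl dotvZr dotv_row_const mulr1 mulrA -invfM -expr2.
by rewrite sqr_sqrtr ?ler0n.
Qed.

Lemma dotv_wlift_xt th r l :
  dotv (wlift th r) (xt x l) = (Num.sqrt 2%:R)^-1 * preact th r l.
Proof. by rewrite /xt dotvZr dotv_row_const mulr1. Qed.

(* The common shape of [Hmat] (th1 = th2) and [Htmat] (th1 the next iterate). *)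
Lemma pattern_kernel_mulmx s th1 th2 (v : 'cV[R]_n) i :
  \sum_(j < n) (m%:R^-1 * dotv (xt x i) (xt x j) *
     \sum_(r < m | a r == s) (if (0 <= dotv (wlift th1 r) (xt x i)) &&
                                 (0 <= dotv (wlift th2 r) (xt x j)) then 1 else 0)) * v j 0
  = m%:R^-1 * 2%:R^-1 * \sum_(r < m | a r == s)
      relu' (preact th1 r i) * \sum_(j < n) v j 0 * relu' (preact th2 r j) * gram j i.
Proof.
have sqrt2_gt0 : 0 < (Num.sqrt 2%:R : R)^-1 by rewrite invr_gt0 sqrtr_gt0 ltr0n.
under eq_bigr => j _ do rewrite dotv_xt gramC mulr_sumr mulr_suml.
rewrite exchange_big mulr_sumr; apply: eq_bigr => r _.
rewrite mulr_sumr mulr_sumr; apply: eq_bigr => j _.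
by rewrite !dotv_wlift_xt relu'M_scale //; ring.
Qed.

Local Notation iterate := (gd a x y P eta).

Lemma Hmat_drift s th0 k i :
  2%:R * eta * (Hmat a x y P eta s th0 k *m (P *m residual (iterate th0 k))) i 0 =
  \sum_(r < m | a r == s)
    relu' (preact (iterate th0 k) r i) * rate (iterate th0 k) r i.
Proof.
rewrite mxE; under eq_bigr do rewrite mxE.
rewrite (pattern_kernel_mulmx s (iterate th0 k) (iterate th0 k)) !mulr_sumr.
(* Abstracting 1/m spares [field] the side condition m != 0, which may fail. *)
apply: eq_bigr => r _; rewrite -/(preact_rate (iterate th0 k) r i).
by move: (m%:R^-1 : R) => M; field.
Qed.

Lemma Htmat_drift s th0 k i :
  2%:R * eta * (Htmat a x y P eta s th0 k *m (P *m residual (iterate th0 k))) i 0 =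
  \sum_(r < m | a r == s)
    relu' (preact (iterate th0 k.+1) r i) * rate (iterate th0 k) r i.
Proof.
rewrite mxE; under eq_bigr do rewrite mxE.
rewrite (pattern_kernel_mulmx s (iterate th0 k.+1) (iterate th0 k)) !mulr_sumr.
apply: eq_bigr => r _; rewrite -/(preact_rate (iterate th0 k) r i).
by move: (m%:R^-1 : R) => M; field.
Qed.

End GradientStep.

Theorem lemma1 (R : rcfType) (n m d : nat) (hm : (0 < m)%N)
  (x : 'I_n -> 'rV[R]_d)
  (hx_sphere : forall i, dotv (x i) (x i) = 1)
  (hx_distinct : injective x)
  (y : 'cV[R]_n)
  (a : 'I_m -> R) (ha : forall r, a r = 1 \/ a r = -1)
  (P : 'M[R]_n) (hPsym : P^T = P)
  (hPpd : forall v : 'cV[R]_n, v != 0 -> 0 < (v^T *m P *m v) 0 0)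
  (th0 : params R m d) (eta : R) (heta : 0 < eta) (k : nat) :
  let z := z_at a x y P eta th0 in
  let Hp := Hmat a x y P eta 1 th0 k in
  let Hm := Hmat a x y P eta (-1) th0 k in
  let Htp := Htmat a x y P eta 1 th0 k in
  let Htm := Htmat a x y P eta (-1) th0 k in
  forall i : 'I_n,
    ((1%:M - (2%:R * eta) *: ((Htp + Hm) *m P)) *m z k) i 0 <= z k.+1 i 0 /\
    z k.+1 i 0 <= ((1%:M - (2%:R * eta) *: ((Hp + Htm) *m P)) *m z k) i 0.
Proof.
move=> z Hp Hm Htp Htm i.
rewrite /z /z_at /u_at !affine_update_entry.
rewrite /Hp /Hm /Htp /Htm !Hmat_drift !Htmat_drift.
have -> : gd a x y P eta th0 k.+1 = gd_step a x y P eta (gd a x y P eta th0 k) by [].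
by apply/andP; apply: residual_step_bounds.
Qed.
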